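(* If $G\in\mathcal{G}_{\mathrm{plin}}$, then for some alphabet $\Sigma$ there is an embedding of $G$ into $\llbracket\Sigma^{\mathbb{Z}}\rrbracket$ whose image has linear plook-ahead and in which the cocycle of every group element takes only even values.
   Context: An alphabet is a finite set with at least two elements. $\llbracket\Sigma^{\mathbb{Z}}\rrbracket$ is the group of homeomorphisms $f$ of $\Sigma^{\mathbb{Z}}$ with a continuous cocycle $c:\Sigma^{\mathbb{Z}}\to\mathbb{Z}$ such that $f(x)=\sigma^{c(x)}(x)$, where $\sigma(x)_i=x_{i+1}$. A subgroup $G\le\llbracket\Sigma^{\mathbb{Z}}\rrbracket$ has plook-ahead $\alpha:\mathbb{N}\to\mathbb{N}$ if $\alpha(0)=0$ and for every non-identity $g\in G$ with cocycle $c$ there are $n\ge1$ and a point $x$ with $\sigma^p(x)=x$ for some $1\le p\le 2n+1$ and $|c(x)|+\alpha(|c(x)|)\ge n$. $\alpha$ is linear if $\alpha(n)\le Cn+C$ for some $C\in\mathbb{N}$ and all $n$. $\mathcal{G}_{\mathrm{plin}}$ is the class of groups isomorphic to a subgroup of $\llbracket\Sigma^{\mathbb{Z}}\rrbracket$, for some alphabet $\Sigma$, having linear plook-ahead. *)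

From mathcomp Require Import all_boot all_order all_algebra.
Set Implicit Arguments. Unset Strict Implicit. Unset Printing Implicit Defensive.
Import Order.TTheory GRing.Theory Num.Theory.
Local Open Scope ring_scope.

Definition alphabet (S : finType) : Prop := (1 < #|S|)%N.

Definition conf (S : finType) := int -> S.

(* sigma^k (x)_i = x_{i+k}, for k : int; sigma = shiftk 1. *)
Definition shiftk (S : finType) (k : int) (x : conf S) : conf S :=
  fun i => x (i + k).

Definition agree (S : finType) (n : nat) (x y : conf S) : Prop :=
  forall i : int, (`|i|%N <= n)%N -> x i = y i.

Definition cont_map (S : finType) (f : conf S -> conf S) : Prop :=
  forall x (m : nat), exists n : nat, forall y, agree n x y -> agree m (f x) (f y).

Definition cont_int (S : finType) (c : conf S -> int) : Prop :=
  forall x, exists n : nat, forall y, agree n x y -> c y = c x.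

Definition homeo (S : finType) (f : conf S -> conf S) : Prop :=
  cont_map f /\ exists g : conf S -> conf S,
    cont_map g /\ (forall x, g (f x) = x) /\ (forall x, f (g x) = x).

Definition cocycle_of (S : finType) (f : conf S -> conf S) (c : conf S -> int) : Prop :=
  cont_int c /\ forall x, f x = shiftk (c x) x.

Definition in_TFG (S : finType) (f : conf S -> conf S) : Prop :=
  homeo f /\ exists c, cocycle_of f c.

Definition has_plookahead (S : finType) (G : Type) (phi : G -> conf S -> conf S)
    (alpha : nat -> nat) : Prop :=
  alpha 0%N = 0%N /\
  forall g : G, phi g <> id -> forall c, cocycle_of (phi g) c ->
    exists n : nat, (1 <= n)%N /\
      exists (x : conf S) (p : nat), (1 <= p <= n.*2.+1)%N /\
        (forall i, shiftk (Posz p) x i = x i) /\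
        (n <= `|c x|%N + alpha `|c x|%N)%N.

Definition linear_fun (alpha : nat -> nat) : Prop :=
  exists C : nat, forall n : nat, (alpha n <= C * n + C)%N.

Definition embedding (G : Type) (mul : G -> G -> G) (S : finType)
    (phi : G -> conf S -> conf S) : Prop :=
  (forall g, in_TFG (phi g)) /\
  (forall g h, phi (mul g h) = phi g \o phi h) /\
  (forall g h, phi g = phi h -> g = h).

Definition is_group (G : Type) (mul : G -> G -> G) (one : G) (inv : G -> G) : Prop :=
  (forall a b c, mul a (mul b c) = mul (mul a b) c) /\
  (forall a, mul one a = a) /\ (forall a, mul (inv a) a = one).

Definition in_Gplin (G : Type) (mul : G -> G -> G) : Prop :=
  exists (S : finType) (phi : G -> conf S -> conf S) (alpha : nat -> nat),
    alphabet S /\ embedding mul phi /\ has_plookahead phi alpha /\ linear_fun alpha.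

From mathcomp Require Import all_boot all_order all_algebra.
From mathcomp Require Import zify ring.
From Stdlib Require Import FunctionalExtensionality ClassicalEpsilon.
Set Implicit Arguments. Unset Strict Implicit. Unset Printing Implicit Defensive.
Import Order.TTheory GRing.Theory Num.Theory.
Local Open Scope ring_scope.

(* Let phi embed G into [[S^Z]] with linear plook-ahead alpha,
   and let c_g be the cocycle of phi g.  Reading a point x of S^Z only on
   its even coordinates gives ev x = (x_{2i})_i, and we let g act by
     phi' g x = sigma^(2 c_g(ev x)) (x),
   so that ev (phi' g x) = phi g (ev x): phi' g runs phi g on the even
   coordinates and drags the odd ones along.  Its cocycle 2 c_g(ev x) is
   even, and phi' is again an embedding because cocycles compose like
   c_{gh}(x) = c_g(phi h x) + c_h(x).  A p-periodic witness z for phi g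
   lifts to the 2p-periodic witness unev z (each letter doubled) for phi' g,
   with doubled cocycle value; this gives the linear plook-ahead
   m |-> 2 alpha(m/2) + 1.
   The file first proves uniqueness of cocycles on a full shift (using
   points that are not periodic under any nonzero shift), then the
   composition rule for cocycles, then the properties of the doubling
   construction, and finally builds phi' from a given embedding. *)

Section Shifts.
Variable S : finType.

Lemma shiftk_add k l (x : conf S) : shiftk k (shiftk l x) = shiftk (k + l) x.
Proof. by apply: functional_extensionality => i; rewrite /shiftk addrA. Qed.

Lemma shiftk0 (x : conf S) : shiftk 0 x = x.
Proof. by apply: functional_extensionality => i; rewrite /shiftk addr0. Qed.

Lemma agree_le m n (x y : conf S) : (m <= n)%N -> agree n x y -> agree m x y.
Proof. by move=> le_mn Axy i Hi; apply: Axy; lia. Qed.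

Definition pad (a b : S) (n : nat) (x : conf S) : conf S := fun i =>
  if (absz i <= n)%N then x i else if i < 0 then a else b.

Lemma pad_agree a b n x : agree n x (pad a b n x).
Proof. by move=> i Hi; rewrite /pad Hi. Qed.

Lemma periodic_iter (y : conf S) d :
  (forall j, y (j + d) = y j) -> forall (m : nat) j, y (j + m%:Z * d) = y j.
Proof.
move=> per; elim=> [|m IH] j; first by rewrite mul0r addr0.
by rewrite -addn1 PoszD mulrDl mul1r addrA per IH.
Qed.

(* With a != b, padded points have no nonzero period: far enough to the
   right of a positive (resp. left of a negative) period, a b-letter would
   be mapped onto an a-letter. *)
Lemma pad_aperiodic a b n x d : a != b ->
  (forall j, pad a b n x (j + d) = pad a b n x j) -> d = 0.
Proof.
move=> ab per; have iter := periodic_iter per (n.*2.+2).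
case: (ltgtP d 0) => // Hd.
- have := iter (n.+1)%:Z; rewrite /pad.
  have -> : (absz (Posz n.+1 + Posz n.*2.+2 * d)%R <= n)%N = false by nia.
  have -> : (absz (Posz n.+1) <= n)%N = false by lia.
  have -> : (Posz n.+1 + Posz n.*2.+2 * d < 0) = true by nia.
  have -> : ((n.+1)%:Z < 0) = false by lia.
  by move=> E; move: ab; rewrite E eqxx.
- have := iter (- (n.+1)%:Z); rewrite /pad.
  have -> : (absz (- Posz n.+1 + Posz n.*2.+2 * d)%R <= n)%N = false by nia.
  have -> : (absz (- Posz n.+1)%R <= n)%N = false by lia.
  have -> : (- Posz n.+1 + Posz n.*2.+2 * d < 0) = false by nia.
  have -> : (- (n.+1)%:Z < 0) = true by lia.
  by move=> E; move: ab; rewrite E eqxx.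
Qed.

Lemma pad_shift_inj a b n x k l : a != b ->
  shiftk k (pad a b n x) = shiftk l (pad a b n x) -> k = l.
Proof.
move=> ab E; apply/eqP; rewrite -subr_eq0; apply/eqP.
apply: (pad_aperiodic (n := n) (x := x) ab) => j.
have := congr1 (fun y => y (j - l)) E; rewrite /shiftk.
have -> : j - l + k = j + (k - l) by ring.
by have -> : j - l + l = j by ring.
Qed.

Lemma cocycle_uniq (a b : S) (f : conf S -> conf S) c1 c2 : a != b ->
  cocycle_of f c1 -> cocycle_of f c2 -> c1 = c2.
Proof.
move=> ab [C1 E1] [C2 E2]; apply: functional_extensionality => x.
have [n1 N1] := C1 x; have [n2 N2] := C2 x.
set y := pad a b (maxn n1 n2) x.
have Ay : agree (maxn n1 n2) x y by apply: pad_agree.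
rewrite -(N1 y); last exact: agree_le (leq_maxl _ _) Ay.
rewrite -(N2 y); last exact: agree_le (leq_maxr _ _) Ay.
by apply: (pad_shift_inj (n := maxn n1 n2) (x := x) ab); rewrite -E1 -E2.
Qed.

Lemma cocycle_id : cocycle_of (@id (conf S)) (fun _ => 0).
Proof. by split=> [x|x]; [exists 0%N | rewrite shiftk0]. Qed.

Lemma cocycle_comp (f g : conf S -> conf S) cf cg :
  cont_map g -> cocycle_of f cf -> cocycle_of g cg ->
  cocycle_of (f \o g) (fun x => cf (g x) + cg x).
Proof.
move=> g_cont [Cf Ef] [Cg Eg]; split=> [y|y]; last first.
  by rewrite /= Ef {2}(Eg y) shiftk_add.
have [n1 N1] := Cg y; have [n2 N2] := Cf (g y); have [n3 N3] := g_cont y n2.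
exists (maxn n1 n3) => w Aw.
rewrite N1; last exact: agree_le (leq_maxl _ _) Aw.
by rewrite N2 //; apply: N3; apply: agree_le (leq_maxr _ _) Aw.
Qed.

Lemma cont_map_shift (c : conf S -> int) :
  cont_int c -> cont_map (fun x => shiftk (c x) x).
Proof.
move=> Hc x m; have [n Hn] := Hc x.
exists (maxn n (m + absz (c x))) => y Ay.
rewrite Hn; last exact: agree_le (leq_maxl _ _) Ay.
move=> i Hi; rewrite /shiftk; apply: Ay.
by have := leq_maxr n (m + absz (c x)); lia.
Qed.

End Shifts.

Section Doubling.
Variable S : finType.

Definition ev (x : conf S) : conf S := fun i => x (2 * i).
Definition unev (z : conf S) : conf S := fun i => z (i %/ 2)%Z.

Lemma ev_unev z : ev (unev z) = z.
Proof. by apply: functional_extensionality => i; rewrite /ev /unev mulrC mulzK. Qed.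

Lemma ev_shift k (x : conf S) : ev (shiftk (2 * k) x) = shiftk k (ev x).
Proof. by apply: functional_extensionality => i; rewrite /ev /shiftk mulrDr. Qed.

Lemma unev_periodic (z : conf S) (p : nat) :
  (forall i, shiftk (Posz p) z i = z i) ->
  forall i, shiftk (Posz p.*2) (unev z) i = unev z i.
Proof.
move=> per i; rewrite /shiftk /unev.
have -> : Posz p.*2 = Posz p * 2 by rewrite -muln2 PoszM.
rewrite divzDr ?mulzK //; last exact: dvdz_mull (dvdzz 2).
exact: per.
Qed.

Definition dcoc (c : conf S -> int) (x : conf S) : int := 2 * c (ev x).
Definition doubled (c : conf S -> int) (x : conf S) : conf S := shiftk (dcoc c x) x.

Lemma cont_int_dcoc c : cont_int c -> cont_int (dcoc c).
Proof.
move=> Hc x; have [n Hn] := Hc (ev x); exists n.*2 => y Ay.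
by rewrite /dcoc Hn // => i Hi; apply: Ay; lia.
Qed.

Lemma doubled_cocycle c : cont_int c -> cocycle_of (doubled c) (dcoc c).
Proof. by move=> Hc; split=> //; apply: cont_int_dcoc. Qed.

Lemma doubled_zero : doubled (fun _ => 0) = id.
Proof.
by apply: functional_extensionality => x; rewrite /doubled /dcoc mulr0 shiftk0.
Qed.

Lemma doubled_comp (f : conf S -> conf S) cf ch :
  (forall z, f z = shiftk (ch z) z) ->
  doubled cf \o doubled ch = doubled (fun z => cf (f z) + ch z).
Proof.
move=> Ef; apply: functional_extensionality => x.
rewrite /= /doubled /dcoc ev_shift -Ef shiftk_add.
by congr (shiftk _ x); ring.
Qed.

Lemma doubled_inj (a b : S) c1 c2 : a != b -> cont_int c1 -> cont_int c2 ->
  doubled c1 = doubled c2 -> c1 = c2.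
Proof.
move=> ab C1 C2 E; apply: functional_extensionality => z.
have D1 := doubled_cocycle C1; rewrite E in D1.
have := congr1 (fun c => c (unev z)) (cocycle_uniq ab D1 (doubled_cocycle C2)).
by rewrite /dcoc ev_unev; lia.
Qed.

End Doubling.

Definition double_lookahead (alpha : nat -> nat) (m : nat) : nat :=
  if m == 0%N then 0%N else (alpha m./2).*2.+1.

Lemma linear_double_lookahead alpha :
  linear_fun alpha -> linear_fun (double_lookahead alpha).
Proof.
move=> [C lin]; exists C.*2.+1 => m; rewrite /double_lookahead.
case: eqP => // /eqP m0.
have : (m./2 <= m)%N by rewrite -{2}(odd_double_half m); lia.
by have := lin m./2; nia.
Qed.

(* A witness (z, p, n) of the plook-ahead of c gives the witness
   (unev z, 2p, 2n + 1) for dcoc c against double_lookahead alpha. *)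
Lemma double_lookahead_witness (S : finType) (alpha : nat -> nat)
    (c : conf S -> int) (z : conf S) (n p : nat) :
  alpha 0%N = 0%N -> (1 <= n)%N -> (1 <= p <= n.*2.+1)%N ->
  (forall i, shiftk (Posz p) z i = z i) ->
  (n <= `|c z|%N + alpha `|c z|%N)%N ->
  exists n' : nat, (1 <= n')%N /\
    exists (x : conf S) (p' : nat), (1 <= p' <= n'.*2.+1)%N /\
      (forall i, shiftk (Posz p') x i = x i) /\
      (n' <= `|dcoc c x|%N + double_lookahead alpha `|dcoc c x|%N)%N.
Proof.
move=> alpha0 n1 p_bd per bound; exists n.*2.+1; split=> //.
exists (unev z), p.*2; split; first by lia.
split; first exact: unev_periodic.
have cz0 : absz (c z) != 0%N by apply/eqP => cz0; move: bound; rewrite cz0 alpha0; lia.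
rewrite /dcoc ev_unev abszM /double_lookahead.
have -> : (absz 2 * absz (c z) == 0)%N = false by lia.
have -> : (absz 2 * absz (c z))./2 = absz (c z) by rewrite [absz 2]/= mul2n half_double.
by lia.
Qed.

(* The group axioms are one-sided; right inverses follow. *)
Lemma group_rinv (G : Type) (mul : G -> G -> G) (one : G) (inv : G -> G) :
  is_group mul one inv -> forall a, mul a (inv a) = one.
Proof.
move=> [assoc [one_mul inv_mul]] a.
have E : mul (inv a) (mul a (inv a)) = inv a by rewrite assoc inv_mul one_mul.
by have := congr1 (mul (inv (inv a))) E; rewrite assoc inv_mul one_mul.
Qed.

Lemma idempotent_surj_id (T : Type) (f : T -> T) :
  (forall x, f (f x) = f x) -> (forall y, exists x, f x = y) -> f = id.
Proof.
move=> idem surj; apply: functional_extensionality => y.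
by have [x <-] := surj y; rewrite idem.
Qed.

Section DoubledEmbedding.
Variables (G : Type) (mul : G -> G -> G) (one : G) (inv : G -> G).
Hypothesis G_group : is_group mul one inv.
Variables (S : finType) (a b : S).
Hypothesis ab : a != b.
Variable phi : G -> conf S -> conf S.
Hypothesis phi_emb : embedding mul phi.

Let phi_TFG : forall g, in_TFG (phi g) := phi_emb.1.
Let phi_mul : forall g h, phi (mul g h) = phi g \o phi h := phi_emb.2.1.

Definition coc (g : G) : conf S -> int :=
  proj1_sig (constructive_indefinite_description _ (proj2 (phi_TFG g))).

Lemma cocP g : cocycle_of (phi g) (coc g).
Proof. exact: proj2_sig (constructive_indefinite_description _ _). Qed.

Lemma coc_cont g : cont_int (coc g).
Proof. exact: (cocP g).1. Qed.

Lemma coc_mul g h : coc (mul g h) = fun z => coc g (phi h z) + coc h z.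
Proof.
apply: (cocycle_uniq ab (cocP _)); rewrite phi_mul.
by apply: cocycle_comp (cocP g) (cocP h); case: (phi_TFG h) => [[]].
Qed.

(* phi one is an idempotent homeomorphism, hence the identity. *)
Lemma phi_one : phi one = id.
Proof.
apply: idempotent_surj_id => [x|y].
  by have := congr1 (fun f => f x) (phi_mul one one); rewrite G_group.2.1.
have [_ [g [_ [_ fg]]]] := (phi_TFG one).1; by exists (g y).
Qed.

Lemma coc_trivial g : phi g = id -> coc g = fun _ => 0.
Proof. by move=> E; apply: (cocycle_uniq ab (cocP g)); rewrite E; apply: cocycle_id. Qed.

Definition phi' (g : G) : conf S -> conf S := doubled (coc g).

Lemma phi'_cocycle g : cocycle_of (phi' g) (dcoc (coc g)).
Proof. exact: doubled_cocycle (coc_cont g). Qed.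

Lemma phi'_mul g h : phi' (mul g h) = phi' g \o phi' h.
Proof. by rewrite /phi' coc_mul (doubled_comp _ (cocP h).2). Qed.

Lemma phi'_one : phi' one = id.
Proof. by rewrite /phi' (coc_trivial phi_one) doubled_zero. Qed.

Lemma phi'_TFG g : in_TFG (phi' g).
Proof.
have cont h : cont_map (phi' h) by apply: cont_map_shift; apply: cont_int_dcoc; apply: coc_cont.
split; last by exists (dcoc (coc g)); apply: phi'_cocycle.
split; first exact: cont.
exists (phi' (inv g)); split; first exact: cont.
split=> x.
- by have := congr1 (fun f => f x) (phi'_mul (inv g) g); rewrite G_group.2.2 phi'_one.
- by have := congr1 (fun f => f x) (phi'_mul g (inv g)); rewrite (group_rinv G_group) phi'_one.
Qed.

(* Injectivity: equal doubled maps have equal cocycles, so equal phi's. *)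
Lemma phi'_inj g h : phi' g = phi' h -> g = h.
Proof.
move=> E; apply: phi_emb.2.2; apply: functional_extensionality => z.
have Ec := doubled_inj ab (coc_cont g) (coc_cont h) E.
by rewrite (cocP g).2 (cocP h).2 Ec.
Qed.

Lemma phi'_embedding : embedding mul phi'.
Proof. by split; [exact: phi'_TFG | split; [exact: phi'_mul | exact: phi'_inj]]. Qed.

Lemma phi'_plookahead alpha :
  has_plookahead phi alpha -> has_plookahead phi' (double_lookahead alpha).
Proof.
move=> [alpha0 pla]; split=> // g phi'g_nid c Hc.
rewrite (cocycle_uniq ab Hc (phi'_cocycle g)).
have phig_nid : phi g <> id.
  by move=> E; apply: phi'g_nid; rewrite /phi' (coc_trivial E) doubled_zero.
have [n [n1 [z [p [p_bd [per bound]]]]]] := pla g phig_nid _ (cocP g).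
exact: double_lookahead_witness alpha0 n1 p_bd per bound.
Qed.

Lemma phi'_even g c : cocycle_of (phi' g) c -> forall x, (2 %| c x)%Z.
Proof. by move=> Hc x; rewrite (cocycle_uniq ab Hc (phi'_cocycle g)); apply: dvdz_mulr. Qed.

End DoubledEmbedding.

Local Close Scope ring_scope.

Theorem mainTheorem5 (G : Type) (mul : G -> G -> G) (one : G) (inv : G -> G) :
  is_group mul one inv ->
  in_Gplin mul ->
  exists (S : finType) (phi : G -> conf S -> conf S) (alpha : nat -> nat),
    alphabet S /\ embedding mul phi /\ has_plookahead phi alpha /\ linear_fun alpha /\
    (forall (g : G) (c : conf S -> int), cocycle_of (phi g) c ->
       forall x : conf S, (2 %| c x)%Z).
Proof.
move=> G_group [S [phi [alpha [alph [emb [pla lin]]]]]].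
have [a [b [_ _ ab]]] := card_gt1P alph.
exists S, (phi' emb), (double_lookahead alpha).
split; first exact: alph.
split; first exact: (phi'_embedding G_group ab emb).
split; first exact: (phi'_plookahead ab emb pla).
split; first exact: (linear_double_lookahead lin).
move=> g c; exact: (phi'_even ab).
Qed.
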